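(* Let $\mathbb{D}$ be a division ring, let $2\le m,n<\infty$, let $P$ be an $n\times m$ matrix over $\mathbb{D}$ with $\operatorname{rank}P=r$, and let $\mathcal{A}=\mathfrak{M}(\mathbb{D}, m, n, P)$. If $r=\min\{m,n\}$, then $\mathcal{A}=\sum^2[\mathcal{A},\mathcal{A}][\mathcal{A},\mathcal{A}]$; that is, $\xi(\mathcal{A})\le 2$.
   Context: $\mathfrak{M}(\mathbb{D}, m, n, P)$ denotes the ring of all $m\times n$ matrices over the division ring $\mathbb{D}$ with entrywise addition and multiplication $A\bullet B = APB$. The commutator is $[x,y]=x\bullet y-y\bullet x$; $[X,Y]=\{[x,y]:x\in X,y\in Y\}$, $XY=\{x\bullet y:x\in X,y\in Y\}$, and $\sum^N S$ denotes the set of sums of $N$ elements of $S$. For a ring $\mathbb{R}$ for which some $N\in\mathbb{N}$ satisfies $\mathbb{R}=\sum^N[\mathbb{R},\mathbb{R}][\mathbb{R},\mathbb{R}]$, $\xi(\mathbb{R})$ is the least such $N$. *)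

From HB Require Import structures.
From mathcomp Require Import all_boot all_order all_algebra.
Set Implicit Arguments. Unset Strict Implicit. Unset Printing Implicit Defensive.
Import GRing.Theory.
Local Open Scope ring_scope.

Definition is_division_ring (D : unitRingType) : Prop :=
  forall x : D, x != 0 -> x \is a GRing.unit.

Definition rows_indep (D : unitRingType) (n m : nat) (P : 'M[D]_(n, m))
  (S : {set 'I_n}) : Prop :=
  forall c : 'rV[D]_n, (forall i, i \notin S -> c 0 i = 0) -> c *m P = 0 -> c = 0.

(* rank P = r : the maximal number of left-linearly independent rows of P is r
   (row rank; over a division ring it equals the column rank). *)
Definition div_rank (D : unitRingType) (n m : nat) (P : 'M[D]_(n, m)) (r : nat) : Prop :=
  (exists S : {set 'I_n}, rows_indep P S /\ #|S| = r) /\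
  (forall S : {set 'I_n}, rows_indep P S -> (#|S| <= r)%N).

(* Multiplication in M(D, m, n, P): A . B = A P B. *)
Definition sandmul (D : unitRingType) (m n : nat) (P : 'M[D]_(n, m))
  (A B : 'M[D]_(m, n)) : 'M[D]_(m, n) := A *m P *m B.

Definition sandcomm (D : unitRingType) (m n : nat) (P : 'M[D]_(n, m))
  (A B : 'M[D]_(m, n)) : 'M[D]_(m, n) := sandmul P A B - sandmul P B A.

From mathcomp Require Import all_boot all_order all_algebra.
Set Implicit Arguments. Unset Strict Implicit. Unset Printing Implicit Defensive.
Import GRing.Theory.
Local Open Scope ring_scope.

(* Full row rank over a division ring yields a right inverse by Gaussian
   elimination, and a square matrix with a right inverse is invertible since
   k + 1 rows of length k are never independent.  Hence P has a left inverse Q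
   when r = m <= n, and then X |-> X Q embeds the m x m matrices into
   M(D, m, n, P) while A = (A P) Q + A (1 - P Q); the case r = n <= m is
   symmetric.  In k x k matrices over any ring, k >= 2, let N be the nilpotent
   shift, H = diag(0, ..., k-1) and E = E_kk, so that [N, H] = N and
   N N^T + E = 1.  Then
     B = N N^T B + E B = [N, H] [N^T, N V] + [E, E_k1] [E_12, E_2k B]
   where V solves the Stein equation V - N V N^T = N^T B (a finite Neumann
   series).  Moreover [N, H] N^T + [E, E_k1] E_12 E_2k = 1, which lets the
   second factors absorb the remainder A (1 - P Q). *)

Definition rows_free (R : pzRingType) n m (P : 'M[R]_(n, m)) : Prop :=
  forall c : 'rV_n, c *m P = 0 -> c = 0.

Lemma rows_free_dsub (R : pzRingType) n1 n2 m (P1 : 'M[R]_(n1, m)) (P2 : 'M_(n2, m)) :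
  rows_free (col_mx P1 P2) -> rows_free P2.
Proof.
move=> P_free c cP2; have := P_free (row_mx 0 c).
rewrite mul_row_col mul0mx add0r cP2 => /(_ erefl) /eqP.
by rewrite row_mx_eq0 => /andP[_ /eqP].
Qed.

Lemma rows_free_col' (R : pzRingType) n m (P : 'M[R]_(n, m.+1)) j :
  col j P = 0 -> rows_free P -> rows_free (col' j P).
Proof.
move=> /matrixP Pj0 P_free c cP; apply: P_free; apply/matrixP => a l; rewrite !mxE.
have [l' ->|->] := unliftP j l.
  by have /matrixP/(_ a l') := cP; rewrite !mxE; under eq_bigr do rewrite mxE.
by rewrite big1 // => i _; have := Pj0 i 0; rewrite !mxE => ->; rewrite mulr0.
Qed.

Lemma rows_indep_rowsub (R : unitRingType) n m k (P : 'M[R]_(n, m))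
    (S : {set 'I_n}) (f : 'I_k -> 'I_n) :
  injective f -> (forall i, f i \in S) -> rows_indep P S -> rows_free (rowsub f P).
Proof.
move=> f_inj fS S_indep c; rewrite rowsubE mulmxA => /S_indep c_f0.
have {}c_f0 : c *m rowsub f 1%:M = 0.
  apply: c_f0 => l lS; rewrite mxE big1 // => i _; rewrite !mxE.
  have [fil|_] := eqVneq (f i) l; last by rewrite mulr0.
  by rewrite -fil fS in lS.
apply/rowP => i; have /rowP/(_ (f i)) := c_f0.
rewrite !mxE (bigD1 i) //= !mxE eqxx mulr1 big1 ?addr0 // => i' ne_i'i.
by rewrite !mxE (inj_eq f_inj) (negbTE ne_i'i) mulr0.
Qed.

Section DivisionRingMatrices.
Variable D : unitRingType.
Hypothesis D_div : is_division_ring D.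

Lemma rV_rinv m (w : 'rV[D]_m) : w != 0 -> exists v : 'cV_m, w *m v = 1%:M.
Proof.
case/rV0Pn => j wj; exists (delta_mx j 0 *m (w 0 j)^-1%:M).
by rewrite mulmxA -colE [col j w]mx11_scalar mxE -scalar_mxM divrr ?D_div.
Qed.

Lemma rows_free_col_mx_rinv n m (p : 'rV[D]_m) (P : 'M_(n, m)) (Q : 'M_(m, n)) :
  rows_free (col_mx p P) -> P *m Q = 1%:M -> exists Q1, col_mx p P *m Q1 = 1%:M.
Proof.
move=> pP_free PQ; pose w := p - p *m Q *m P.
have /rV_rinv [v wv] : w != 0.
  apply/eqP => w0; have := pP_free (row_mx 1%:M (- (p *m Q))).
  rewrite mul_row_col mul1mx mulNmx [_ - _]w0.
  by move=> /(_ erefl) /eqP; rewrite row_mx_eq0 oner_eq0.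
pose q := v - Q *m (P *m v).
have Pq : P *m q = 0 by rewrite mulmxBr (mulmxA P Q) PQ mul1mx subrr.
have pq : p *m q = 1%:M by rewrite mulmxBr !mulmxA -mulmxBl.
exists (row_mx q (Q - q *m (p *m Q))).
rewrite mul_col_row Pq pq !mulmxBr PQ !mulmxA pq Pq !mul1mx !mul0mx subrr subr0.
by rewrite scalar_mx_block.
Qed.

Lemma rows_free_rinv n m (P : 'M[D]_(n, m)) :
  rows_free P -> exists Q, P *m Q = 1%:M.
Proof.
elim: n P => [|n IHn] P; first by exists 0; rewrite !flatmx0.
rewrite -[n.+1]/(1 + n)%N in P *; rewrite -[P]vsubmxK => P_free.
have [Q PQ] := IHn _ (rows_free_dsub P_free).
exact: rows_free_col_mx_rinv P_free PQ.
Qed.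

Lemma rows_free_pivot n m (p : 'rV[D]_m) (P : 'M_(n, m)) j :
  p 0 j \is a GRing.unit -> rows_free (col_mx p P) ->
  col j (P - col j P *m ((p 0 j)^-1 *: p)) = 0 /\
  rows_free (P - col j P *m ((p 0 j)^-1 *: p)).
Proof.
move=> pj_unit pP_free; split.
  by apply/matrixP => i l; rewrite !mxE big_ord1 !mxE mulVr ?mulr1 ?subrr.
move=> c cR; have := pP_free (row_mx (- (c *m col j P *m (p 0 j)^-1%:M)) c).
rewrite mul_row_col mulNmx -!mulmxA mul_scalar_mx addrC -mulmxBr cR.
by move=> /(_ erefl) /eqP; rewrite row_mx_eq0 => /andP[_ /eqP].
Qed.

Lemma rows_free_leq n m (P : 'M[D]_(n, m)) : rows_free P -> (n <= m)%N.
Proof.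
elim: n m P => // n IHn m; rewrite -[n.+1]/(1 + n)%N => P.
rewrite -[P]vsubmxK; set p := usubmx P; set P' := dsubmx P => pP_free.
have /rV0Pn [j pj] : p != 0.
  apply/eqP => p0; have := pP_free (row_mx 1%:M 0).
  rewrite mul_row_col mul1mx mul0mx addr0 p0 => /(_ erefl) /eqP.
  by rewrite row_mx_eq0 oner_eq0.
case: m => [|m] in P p P' pP_free j pj *; first by case: j pj.
have [Rj0 R_free] := rows_free_pivot (D_div pj) pP_free.
exact: IHn _ _ (rows_free_col' Rj0 R_free).
Qed.

Lemma div_mulmx1C k (M T : 'M[D]_k) : M *m T = 1%:M -> T *m M = 1%:M.
Proof.
move=> MT; pose E := 1%:M - T *m M.
have ME : M *m E = 0 by rewrite mulmxBr mulmx1 mulmxA MT mul1mx subrr.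
have EE : E *m E = E by rewrite {1}/E mulmxBl mul1mx -mulmxA ME mulmx0 subr0.
suff /eqP : E = 0 by rewrite subr_eq0 => /eqP <-.
clearbody E; apply/eqP/negPn/negP => /matrix0Pn [i [j Eij]].
pose e := row i E; have eE : e *m E = e by rewrite -row_mul EE.
suff /rows_free_leq : rows_free (col_mx M e) by rewrite addn1 ltnn.
move=> c; rewrite -[c]hsubmxK mul_row_col => cMe.
have be0 : rsubmx c *m e = 0.
  have := congr1 (mulmx^~ E) cMe.
  by rewrite mulmxDl -!mulmxA ME mulmx0 add0r eE mul0mx.
have b0 : rsubmx c = 0.
  apply/rowP => a; have /rowP/(_ j) := be0; rewrite ord1 !mxE big_ord1 !mxE.
  by move/(congr1 ( *%R^~ (E i j)^-1)); rewrite mulrK ?mul0r ?D_div.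
have a0 : lsubmx c = 0.
  move: cMe; rewrite b0 mul0mx addr0 => /(congr1 (mulmx^~ T)).
  by rewrite -mulmxA MT mulmx1 mul0mx.
by rewrite a0 b0 row_mx0.
Qed.

Lemma rows_indep_rinv n m (P : 'M[D]_(n, m)) S :
  rows_indep P S -> #|S| = n -> exists Q, P *m Q = 1%:M.
Proof.
move=> S_indep cardS; have ST : S = setT.
  by apply/eqP; rewrite eqEcard subsetT cardsT card_ord cardS /=.
by apply: rows_free_rinv => c; apply: S_indep => i; rewrite ST in_setT.
Qed.

Lemma rows_indep_linv n m (P : 'M[D]_(n, m)) S :
  rows_indep P S -> #|S| = m -> exists Q, Q *m P = 1%:M.
Proof.
move=> S_indep cardS; pose f i : 'I_n := enum_val (cast_ord (esym cardS) i).
have f_inj : injective f by move=> i1 i2 /enum_val_inj /cast_ord_inj.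
have fP_free := rows_indep_rowsub f_inj (fun i => enum_valP _) S_indep.
have [T fPT] := rows_free_rinv fP_free.
by exists (T *m rowsub f 1%:M); rewrite -mulmxA -rowsubE div_mulmx1C.
Qed.
End DivisionRingMatrices.

Definition lie (R : pzRingType) (x y : R) : R := x * y - y * x.

Section LieProducts.
Variable R : pzRingType.
Implicit Types a b c n t h : R.

Lemma stein_nilpotent a b c k : a ^+ k = 0 -> exists v, v - a * v * b = c.
Proof.
move=> ak0; exists (\sum_(0 <= i < k) a ^+ i * c * b ^+ i).
rewrite mulr_sumr mulr_suml -sumrB.
rewrite (@telescope_sumr_eq _ _ _ (fun i => - (a ^+ i * c * b ^+ i))) //.
  by rewrite ak0 !mul0r oppr0 sub0r opprK expr0 mul1r mulr1.
by move=> i _; rewrite opprK addrC exprS exprSr !mulrA.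
Qed.

Lemma lie_prod_nil_l n t h b k : n ^+ k = 0 -> lie n h = n -> n * t * n = n ->
  exists w, n * t * b = lie n h * lie t w.
Proof.
move=> nk0 nh ntn; have [v ev] := stein_nilpotent t (t * b) nk0.
exists (n * v); rewrite nh /lie mulrBr !mulrA ntn -!mulrA -mulrBr.
by rewrite -ev mulrA.
Qed.

Lemma lie_prod_nil_r n t h b k : n ^+ k = 0 -> lie h t = t -> t * n * t = t ->
  exists x, b * (n * t) = lie x n * lie h t.
Proof.
move=> nk0 ht tnt; have [v ev] := stein_nilpotent t (b * n) nk0.
exists (v * t); rewrite ht /lie mulrBl.
have -> : v * t * n * t = v * (t * n * t) by rewrite !mulrA.
by rewrite tnt -mulrBl (mulrA n) ev mulrA.
Qed.
End LieProducts.

Section ShiftMatrix.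
Variables (R : pzRingType) (k : nat).

Definition shift_mx : 'M[R]_k := \matrix_(i, j) (i.+1 == j :> nat)%:R.
Definition index_mx : 'M[R]_k := diag_mx (\row_(i < k) i%:R).

Local Notation N := shift_mx.
Local Notation H := index_mx.

Lemma shift_mx_expE t i j : (N ^+ t) i j = ((i + t)%N == j :> nat)%:R.
Proof.
elim: t i j => [|t IHt] i j; first by rewrite expr0 mxE addn0.
rewrite exprSr mxE.
under eq_bigr do rewrite IHt mxE mulr_natl mulrb eq_sym.
rewrite -big_mkcond /= (big_ord1_eq _ (fun l => (l.+1 == j :> nat)%:R)) addnS.
case: ltnP => // le_k_it; case: eqP => // eq_j.
by move: (ltn_ord j); rewrite -eq_j ltnNge (leq_trans le_k_it).
Qed.

Lemma shift_mx_nilpotent : N ^+ k = 0.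
Proof.
apply/matrixP => i j; rewrite shift_mx_expE mxE.
by case: eqP => // eq_j; move: (ltn_ord j); rewrite -eq_j ltnNge leq_addl.
Qed.

Lemma lie_shift_index : lie N H = N.
Proof.
apply/matrixP => i j; rewrite /lie -mulmxE mul_mx_diag mul_diag_mx !mxE.
case: eqP => [<-|_]; last by rewrite !mul0r mulr0 subr0.
by rewrite mul1r mulr1 -addn1 natrD addrC addKr.
Qed.

Lemma lie_index_trmx_shift : lie H N^T = N^T.
Proof.
apply/matrixP => i j; rewrite /lie -mulmxE mul_mx_diag mul_diag_mx !mxE.
case: eqP => [<-|_]; last by rewrite !mul0r mulr0 subr0.
by rewrite mul1r mulr1 -addn1 natrD addrAC subrr add0r.
Qed.
End ShiftMatrix.

Section ShiftMatrixCorner.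
Variables (R : pzRingType) (K : nat).
Local Notation N := (shift_mx R K.+1).
Local Notation E := (delta_mx ord_max ord_max : 'M[R]_K.+1).

Lemma shift_mul_trmx : N * N^T + E = 1.
Proof.
apply/matrixP => i j; rewrite !mxE.
under eq_bigr do rewrite !mxE mulr_natl mulrb [i.+1 == _]eq_sym.
rewrite -big_mkcond /= (big_ord1_eq _ (fun l => (j.+1 == l :> nat)%:R)).
case: ltnP => [lt_i_K1 | le_K1_i].
  have i_max : i != ord_max by rewrite -val_eqE /= neq_ltn -ltnS lt_i_K1.
  by rewrite (negbTE i_max) addr0 eqSS eq_sym.
have -> : i = ord_max by apply/val_inj/eqP; rewrite /= eqn_leq -ltnS ltn_ord -ltnS.
by rewrite add0r eqxx eq_sym.
Qed.

Lemma corner_mul_shift : E * N = 0.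
Proof.
apply/matrixP => i j; rewrite !mxE big1 // => l _; rewrite !mxE.
by case: (l =P ord_max) => [->|]; rewrite ?andbF ?mul0r //= eqn_leq leqNgt ltn_ord mulr0.
Qed.

Lemma trmx_shift_mul_corner : N^T * E = 0.
Proof.
apply/matrixP => i j; rewrite !mxE big1 // => l _; rewrite !mxE.
by case: (l =P ord_max) => [->|]; rewrite ?mulr0 //= eqn_leq leqNgt ltn_ord mul0r.
Qed.

Lemma shift_trmx_shift : N * N^T * N = N.
Proof.
by rewrite -[N * N^T](addrK E) shift_mul_trmx mulrBl mul1r corner_mul_shift subr0.
Qed.

Lemma trmx_shift_trmx : N^T * N * N^T = N^T.
Proof.
rewrite -mulrA -[N * N^T](addrK E) shift_mul_trmx mulrBr mulr1.
by rewrite trmx_shift_mul_corner subr0.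
Qed.
End ShiftMatrixCorner.

Section DeltaLie.
Variables (R : pzRingType) (k : nat) (i j l : 'I_k).
Hypotheses (neq_ij : i != j) (neq_jl : j != l).
Local Notation e := (@delta_mx R k k).

Lemma lie_delta_diagl : lie (e i i) (e i j) = e i j.
Proof. by rewrite /lie -mulmxE !mul_delta_mx mul_delta_mx_0 ?subr0 // eq_sym. Qed.

Lemma lie_delta_diagr : lie (e j i) (e i i) = e j i.
Proof. by rewrite /lie -mulmxE !mul_delta_mx (mul_delta_mx_0 _ _ _ neq_ij) subr0. Qed.

Lemma delta_mul_lie_prod (M : 'M[R]_k) :
  e i i * M = lie (e i i) (e i j) * lie (e j l) (e l i * M).
Proof.
rewrite lie_delta_diagl /lie -mulmxE mulmxBr !mulmxA !mul_delta_mx.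
by rewrite (mul_delta_mx_0 _ _ _ neq_jl) !mul0mx subr0.
Qed.

Lemma mul_delta_lie_prod (M : 'M[R]_k) :
  M * e i i = lie (M * e i l) (e l j) * lie (e j i) (e i i).
Proof.
rewrite lie_delta_diagr /lie -mulmxE mulmxBl -!mulmxA !mul_delta_mx.
by rewrite mul_delta_mx_0 ?mulmx0 ?subr0 // eq_sym.
Qed.
End DeltaLie.

Definition lie2_decomp_r (R : pzRingType) (b : R) : Prop :=
  exists x1 y1 z1 w1 x2 y2 z2 w2 u1 u2 : R,
    b = lie x1 y1 * lie z1 w1 + lie x2 y2 * lie z2 w2 /\
    lie x1 y1 * z1 * u1 + lie x2 y2 * z2 * u2 = 1.

Definition lie2_decomp_l (R : pzRingType) (b : R) : Prop :=
  exists x1 y1 z1 w1 x2 y2 z2 w2 u1 u2 : R,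
    b = lie x1 y1 * lie z1 w1 + lie x2 y2 * lie z2 w2 /\
    u1 * y1 * lie z1 w1 + u2 * y2 * lie z2 w2 = 1.

Section SquareMatrices.
Variable R : pzRingType.

Lemma mx_lie2_decomp_r k (B : 'M[R]_k) : (1 < k)%N -> lie2_decomp_r B.
Proof.
case: k B => [|[|K]] // B _.
pose i : 'I_K.+2 := ord_max; pose j : 'I_K.+2 := ord0.
pose l : 'I_K.+2 := Ordinal (isT : 1 < K.+2)%N.
have [w ew] := lie_prod_nil_l B (shift_mx_nilpotent _ _) (lie_shift_index _ _)
  (shift_trmx_shift _ _).
exists (shift_mx R K.+2), (index_mx R K.+2), (shift_mx R K.+2)^T, w.
exists (delta_mx i i), (delta_mx i j), (delta_mx j l), (delta_mx l i * B), 1, (delta_mx l i).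
split.
  by rewrite -ew -delta_mul_lie_prod // -mulrDl shift_mul_trmx mul1r.
rewrite mulr1 lie_shift_index lie_delta_diagl //.
by rewrite -mulmxE !mul_delta_mx shift_mul_trmx.
Qed.

Lemma mx_lie2_decomp_l k (B : 'M[R]_k) : (1 < k)%N -> lie2_decomp_l B.
Proof.
case: k B => [|[|K]] // B _.
pose i : 'I_K.+2 := ord_max; pose j : 'I_K.+2 := ord0.
pose l : 'I_K.+2 := Ordinal (isT : 1 < K.+2)%N.
have [x ex] := lie_prod_nil_r B (shift_mx_nilpotent _ _) (lie_index_trmx_shift _ _)
  (trmx_shift_trmx _ _).
exists x, (shift_mx R K.+2), (index_mx R K.+2), (shift_mx R K.+2)^T.
exists (B * delta_mx i l), (delta_mx l j), (delta_mx j i), (delta_mx i i), 1, (delta_mx i l).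
split.
  by rewrite -ex -mul_delta_lie_prod // -mulrDr shift_mul_trmx mulr1.
rewrite mul1r lie_index_trmx_shift lie_delta_diagr //.
by rewrite -mulmxE !mul_delta_mx shift_mul_trmx.
Qed.
End SquareMatrices.

Section Sandwich.
Variables (D : unitRingType) (m n : nat) (P : 'M[D]_(n, m)).

Definition sum2_sandcomm_prod (A : 'M[D]_(m, n)) : Prop :=
  exists x1 y1 z1 w1 x2 y2 z2 w2 : 'M[D]_(m, n),
    A = sandmul P (sandcomm P x1 y1) (sandcomm P z1 w1)
      + sandmul P (sandcomm P x2 y2) (sandcomm P z2 w2).

Section LeftInverse.
Variables (Q : 'M[D]_(m, n)) (QP : Q *m P = 1%:M).

Lemma sandmul_linv (X : 'M_m) M : sandmul P (X *m Q) M = X *m M.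
Proof. by rewrite /sandmul -(mulmxA X) QP mulmx1. Qed.

Lemma sandcomm_linv (X Y : 'M_m) U : U *m P = 0 ->
  sandcomm P (X *m Q) (Y *m Q + U) = lie X Y *m Q + X *m U.
Proof.
move=> UP; rewrite /sandcomm !sandmul_linv /sandmul mulmxDl -mulmxA QP mulmx1 UP.
by rewrite addr0 mulmxDr /lie -mulmxE mulmxBl !mulmxA addrAC.
Qed.

Lemma sum2_sandcomm_prod_linv A : lie2_decomp_r (A *m P) -> sum2_sandcomm_prod A.
Proof.
move=> [x1 [y1 [z1 [w1 [x2 [y2 [z2 [w2 [u1 [u2 [eAP e1]]]]]]]]]]].
pose U := A *m (1%:M - P *m Q).
have UP (v : 'M_m) : v *m U *m P = 0.
  by rewrite -!mulmxA mulmxBl mul1mx -mulmxA QP mulmx1 subrr !mulmx0.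
have sandcommQ X Y : sandcomm P (X *m Q) (Y *m Q) = lie X Y *m Q.
  by rewrite -[Y *m Q]addr0 sandcomm_linv ?mul0mx // mulmx0 addr0.
exists (x1 *m Q), (y1 *m Q), (z1 *m Q), (w1 *m Q + u1 *m U).
exists (x2 *m Q), (y2 *m Q), (z2 *m Q), (w2 *m Q + u2 *m U).
rewrite !sandcommQ !sandcomm_linv // !sandmul_linv !mulmxDr !mulmxA addrACA.
rewrite -!mulmxDl -eAP e1 mul1mx mulmxBr mulmx1 mulmxA.
by rewrite addrC subrK.
Qed.
End LeftInverse.

Section RightInverse.
Variables (Q : 'M[D]_(m, n)) (PQ : P *m Q = 1%:M).

Lemma sandmul_rinv M (X : 'M_n) : sandmul P M (Q *m X) = M *m X.
Proof. by rewrite /sandmul -mulmxA (mulmxA P) PQ mul1mx. Qed.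

Lemma sandcomm_rinv (X Y : 'M_n) U : P *m U = 0 ->
  sandcomm P (Q *m X + U) (Q *m Y) = Q *m lie X Y + U *m Y.
Proof.
move=> PU; rewrite /sandcomm !sandmul_rinv /sandmul -(mulmxA _ P) mulmxDr mulmxA PQ.
by rewrite mul1mx PU addr0 mulmxDl /lie -mulmxE mulmxBr !mulmxA addrAC.
Qed.

Lemma sum2_sandcomm_prod_rinv A : lie2_decomp_l (P *m A) -> sum2_sandcomm_prod A.
Proof.
move=> [x1 [y1 [z1 [w1 [x2 [y2 [z2 [w2 [u1 [u2 [ePA e1]]]]]]]]]]].
pose U := (1%:M - Q *m P) *m A.
have PU (v : 'M_n) : P *m (U *m v) = 0.
  by rewrite !mulmxA mulmxBr mulmx1 mulmxA PQ mul1mx subrr !mul0mx.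
have sandcommQ X Y : sandcomm P (Q *m X) (Q *m Y) = Q *m lie X Y.
  by rewrite -[Q *m X]addr0 sandcomm_rinv ?mulmx0 // mul0mx addr0.
exists (Q *m x1 + U *m u1), (Q *m y1), (Q *m z1), (Q *m w1).
exists (Q *m x2 + U *m u2), (Q *m y2), (Q *m z2), (Q *m w2).
rewrite !sandcommQ !sandcomm_rinv // !sandmul_rinv !mulmxDl -!mulmxA addrACA.
rewrite -!mulmxDr -ePA !(mulmxA u1, mulmxA u2) e1 mulmx1 mulmxA mulmxBl mul1mx.
by rewrite addrC subrK.
Qed.
End RightInverse.
End Sandwich.

Theorem theorem2p7 (D : unitRingType) (hD : is_division_ring D)
  (m n : nat) (hm : (2 <= m)%N) (hn : (2 <= n)%N)
  (P : 'M[D]_(n, m)) (r : nat) (hr : div_rank P r) (hrmin : r = minn m n) :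
  forall A : 'M[D]_(m, n),
    exists x1 y1 z1 w1 x2 y2 z2 w2 : 'M[D]_(m, n),
      A = sandmul P (sandcomm P x1 y1) (sandcomm P z1 w1)
        + sandmul P (sandcomm P x2 y2) (sandcomm P z2 w2).
Proof.
move=> A; have [[S [S_indep cardS]] _] := hr; rewrite hrmin in cardS.
have [le_mn | /ltnW le_nm] := leqP m n.
  rewrite (minn_idPl le_mn) in cardS.
  have [Q QP] := rows_indep_linv hD S_indep cardS.
  by apply: (sum2_sandcomm_prod_linv QP); apply: mx_lie2_decomp_r.
rewrite (minn_idPr le_nm) in cardS.
have [Q PQ] := rows_indep_rinv hD S_indep cardS.
by apply: (sum2_sandcomm_prod_rinv PQ); apply: mx_lie2_decomp_l.
Qed.
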